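(* Let $v\ge 0$. The optimal value of $$\min_{y\in\mathbb{R}^{n^-}}\ -\sum_{i=1}^{n^-}\left(\frac{y_i}{\lambda}\right)^{1/\beta}\quad\text{s.t.}\quad y_1\ge\cdots\ge y_{n^-}\ge 0,\qquad \sum_{i=1}^{n^-}h^-_iy_i=v$$ equals $$-\left(\frac{v}{\lambda}\right)^{1/\beta}\cdot\max_{L\in\{1,\dots,n^-\}} L\cdot\Big(\sum_{i=1}^{L}h^-_i\Big)^{-1/\beta}.$$
   Context: Fix $N\in\mathbb{N}$, $\beta\in(0,1)$, $\lambda>0$, and an integer $1\le n^-\le N$. A function $f:[0,1]\to\mathbb{R}$ is inverse S-shaped if it is strictly increasing, continuously differentiable, and there is $x_0\in[0,1]$ such that $f'$ is strictly decreasing on $[0,x_0]$ and strictly increasing on $[x_0,1]$. Let $W^-:[0,1]\to[0,1]$ be inverse S-shaped with $W^-(0)=0$, $W^-(1)=1$, and $h^-_i:=W^-\!\left(\frac{i}{N}\right)-W^-\!\left(\frac{i-1}{N}\right)$ for $i=1,\dots,n^-$. *)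

From HB Require Import structures.
From mathcomp Require Import all_boot all_order all_algebra.
From mathcomp Require Import all_classical all_reals all_analysis.
Set Implicit Arguments. Unset Strict Implicit. Unset Printing Implicit Defensive.
Import Order.TTheory GRing.Theory Num.Theory.
Import numFieldNormedType.Exports.
Local Open Scope classical_set_scope.
Local Open Scope ring_scope.

Definition inverse_S_shaped (R : realType) (f : R -> R) : Prop :=
  (forall a b : R, 0 <= a -> a < b -> b <= 1 -> f a < f b) /\
  exists df : R -> R,
    [/\ {within `[0, 1], continuous df},
        (forall x : R, 0 < x < 1 -> is_derive x 1 f (df x)),
        (fun t : R => t^-1 * (f t - f 0)) @ 0^'+ --> df 0,
        (fun t : R => t^-1 * (f (1 + t) - f 1)) @ 0^'- --> df 1 &
        exists x0 : R, [/\ 0 <= x0 <= 1,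
          (forall a b : R, 0 <= a -> a < b -> b <= x0 -> df b < df a) &
          (forall a b : R, x0 <= a -> a < b -> b <= 1 -> df a < df b)]].

(* h^-_i = W(i/N) - W((i-1)/N), for i >= 1 (1-indexed) *)
Definition hminus (R : realType) (W : R -> R) (N i : nat) : R :=
  W (i%:R / N%:R) - W ((i - 1)%N%:R / N%:R).

(* objective: - sum_{i=1}^{n} (y_i/lambda)^(1/beta); y : 'I_n, y i = y_{i+1} *)
Definition objective (R : realType) (n : nat) (beta lambda : R) (y : 'I_n -> R) : R :=
  - \sum_(i < n) powR (y i / lambda) (1 / beta).

Definition feasible (R : realType) (W : R -> R) (N n : nat) (v : R)
  (y : 'I_n -> R) : Prop :=
  (forall i j : 'I_n, (i <= j)%N -> y j <= y i) /\
  (forall i : 'I_n, 0 <= y i) /\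
  \sum_(i < n) hminus W N i.+1 * y i = v.

From HB Require Import structures.
From mathcomp Require Import all_boot all_order all_algebra.
From mathcomp Require Import all_classical all_reals all_analysis.
From mathcomp Require Import ring.
Set Implicit Arguments. Unset Strict Implicit. Unset Printing Implicit Defensive.
Import Order.TTheory GRing.Theory Num.Theory.
Local Open Scope ring_scope.

(* With [p = 1 / beta > 1], the weights [h_i] are positive because [W] is
   increasing.  A nonincreasing [y] with [y_(n+1) = 0] is the sum of the layers
   [(y_k - y_(k+1)) 1_(i <= k)], and summation by parts turns the budget
   [sum_i h_i y_i] into [sum_k (y_k - y_(k+1)) H_k] with [H_k = h_1 + ... + h_k].
   Hence a feasible [y] is a convex combination of the step vectors
   [(v / H_L) 1_(i <= L)], and Jensen's inequality for [t |-> t ^ p] bounds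
   [sum_i (y_i / lambda) ^ p] by the largest value at a step vector,
   [(v / lambda) ^ p * max_L L * H_L ^ (- p)], which the best step attains. *)

Lemma big_nat_leq_cond (T : Type) (idx : T) (op : Monoid.law idx) n k
    (F : nat -> T) : (k < n)%N ->
  \big[op/idx]_(0 <= i < n | (i <= k)%N) F i = \big[op/idx]_(0 <= i < k.+1) F i.
Proof.
by move=> lt_kn; rewrite (big_nat_widen 0 k.+1 n) //; apply: eq_bigl => i; rewrite ltnS.
Qed.

Lemma big_ord_leq_cond (T : Type) (idx : T) (op : Monoid.law idx) n (L : 'I_n)
    (F : nat -> T) :
  \big[op/idx]_(i < n | (i <= L)%N) F i = \big[op/idx]_(0 <= i < L.+1) F i.
Proof. by rewrite -(big_mkord (fun i => i <= L)%N) big_nat_leq_cond. Qed.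

Section PowerSums.
Variable R : realType.
Implicit Types p m z : R.

Lemma powR_tangent_le p m z : 1 < p -> 0 <= m -> 0 <= z ->
  m `^ p + p * m `^ (p - 1) * (z - m) <= z `^ p.
Proof.
move=> p_gt1 m_ge0 z_ge0.
have p_gt0 : 0 < p by rewrite (lt_trans ltr01).
have p1_gt0 : 0 < p - 1 by rewrite subr_gt0.
pose q := p / (p - 1).
have q_gt0 : 0 < q by rewrite divr_gt0.
have pq : p^-1 + q^-1 = 1 by rewrite /q invf_div; field; rewrite gt_eqF.
have mq : m `^ (p - 1) `^ q = m `^ p.
  by rewrite -powRrM /q mulrCA mulfV ?gt_eqF ?mulr1.
(* Young's inequality for [z] and [m `^ (p - 1)] *)
have young := conjugate_powR z_ge0 (powR_ge0 m (p - 1)) p_gt0 q_gt0 pq.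
have {}young : p * (z * m `^ (p - 1)) <= z `^ p + (p - 1) * m `^ p.
  move: (ler_wpM2l (ltW p_gt0) young); rewrite mq.
  by congr (_ <= _); rewrite /q; field; rewrite !gt_eqF.
rewrite -(mulr_powRB1 m_ge0 p_gt0) in young *; set M := m `^ (p - 1) in young *.
rewrite -subr_ge0.
have -> : z `^ p - (m * M + p * M * (z - m)) =
  z `^ p + (p - 1) * (m * M) - p * (z * M) by ring.
by rewrite subr_ge0.
Qed.

Lemma jensen_powR (I : eqType) (r : seq I) (w z : I -> R) p : 1 < p ->
  (forall k, k \in r -> 0 <= w k) -> (forall k, k \in r -> 0 <= z k) ->
  (\sum_(k <- r) w k * z k) `^ p <=
    (\sum_(k <- r) w k) `^ (p - 1) * \sum_(k <- r) w k * z k `^ p.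
Proof.
move=> p_gt1 w_ge0 z_ge0.
have p_gt0 : 0 < p by rewrite (lt_trans ltr01).
set S := \sum_(k <- r) w k * z k; set V := \sum_(k <- r) w k.
have V_ge0 : 0 <= V by rewrite /V big_seq sumr_ge0.
have S_ge0 : 0 <= S.
  by rewrite /S big_seq sumr_ge0 // => k kr; rewrite mulr_ge0 ?w_ge0 ?z_ge0.
have [V_eq0 | V_neq0] := eqVneq V 0.
  suff -> : S = 0.
    rewrite powR0 ?gt_eqF // mulr_ge0 ?powR_ge0 // big_seq sumr_ge0 // => k kr.
    by rewrite mulr_ge0 ?w_ge0 ?powR_ge0.
  move/eqP: V_eq0; rewrite /V big_seq psumr_eq0 // => /allP w_eq0.
  rewrite /S big_seq big1 // => k kr.
  by have /implyP/(_ kr)/eqP -> := w_eq0 k kr; rewrite mul0r.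
set m := S / V.
have m_ge0 : 0 <= m by rewrite divr_ge0.
set c := p * m `^ (p - 1).
have S_eq : S = V * m by rewrite /m mulrC divfK.
have tangent_sum : \sum_(k <- r) w k * (m `^ p + c * (z k - m)) = V * m `^ p.
  rewrite (eq_bigr (fun k => (m `^ p - c * m) * w k + c * (w k * z k))); last first.
    by move=> k _; ring.
  by rewrite big_split /= -!mulr_sumr -/S -/V S_eq; ring.
have tangent : V * m `^ p <= \sum_(k <- r) w k * z k `^ p.
  rewrite -tangent_sum big_seq [X in _ <= X]big_seq; apply: ler_sum => k kr.
  by rewrite ler_wpM2l ?w_ge0 // powR_tangent_le ?z_ge0.
by rewrite S_eq powRM // -mulr_powRB1 // -mulrA mulrCA ler_wpM2l ?powR_ge0.
Qed.

Lemma summation_by_parts (h Z : nat -> R) n :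
  \sum_(0 <= i < n) h i * Z i =
  \sum_(0 <= k < n) (Z k - Z k.+1) * \sum_(0 <= i < k.+1) h i
  + Z n * \sum_(0 <= i < n) h i.
Proof.
elim: n => [|n IHn]; first by rewrite !big_geq // mulr0 addr0.
by rewrite !big_nat_recr //= IHn; ring.
Qed.

Lemma layer_decomposition (Z : nat -> R) n i : Z n = 0 -> (i <= n)%N ->
  Z i = \sum_(0 <= k < n | (i <= k)%N) (Z k - Z k.+1).
Proof.
move=> Zn0 le_in.
transitivity (\sum_(i <= k < n) (Z k - Z k.+1)); last by rewrite (big_nat_widenl i 0).
rewrite (eq_bigr (fun k => - (Z k.+1 - Z k))) => [|k _]; last by rewrite opprB.
by rewrite sumrN telescope_sumr // Zn0 sub0r opprK.
Qed.

Lemma partial_sum_gt0 (h : nat -> R) n k : (forall i, (i < n)%N -> 0 < h i) ->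
  (k < n)%N -> 0 < \sum_(0 <= i < k.+1) h i.
Proof.
move=> h_gt0 lt_kn; rewrite big_nat_recr //= ltr_wpDl ?h_gt0 // big_nat sumr_ge0 //.
by move=> i /andP[_ lt_ik]; rewrite ltW // h_gt0 // (ltn_trans lt_ik).
Qed.

(* [k.+1%:R * H ^ (- p)] is [\sum_i y i `^ p] for the step vector
   [y i = (i <= k) / H], where [H = h 0 + ... + h k] makes [\sum_i h i * y i = 1]. *)
Definition max_step_value (h : nat -> R) n p : R :=
  \big[Num.max/0]_(k < n) (k.+1%:R * (\sum_(0 <= i < k.+1) h i) `^ (- p)).

Lemma sum_powR_le_max_step (n : nat) p (h Z : nat -> R) : 1 < p ->
  (forall i, (i < n)%N -> 0 < h i) ->
  (forall k, (k < n)%N -> Z k.+1 <= Z k) -> Z n = 0 ->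
  \sum_(0 <= i < n) Z i `^ p <= (\sum_(0 <= i < n) h i * Z i) `^ p *
    max_step_value h n p.
Proof.
move=> p_gt1 h_gt0 Z_noninc Zn0.
have p_gt0 : 0 < p by rewrite (lt_trans ltr01).
set u := \sum_(0 <= i < n) h i * Z i.
set M := max_step_value h n p.
pose H k := \sum_(0 <= i < k.+1) h i.
pose w k := (Z k - Z k.+1) * H k.
have H_gt0 k : (k < n)%N -> 0 < H k by exact: partial_sum_gt0.
have w_ge0 k : (k < n)%N -> 0 <= w k.
  by move=> lt_kn; rewrite mulr_ge0 ?subr_ge0 ?Z_noninc // ltW ?H_gt0.
have u_eq : u = \sum_(0 <= k < n) w k.
  by rewrite /u summation_by_parts Zn0 mul0r addr0.
have u_ge0 : 0 <= u by rewrite u_eq big_nat sumr_ge0 // => k /andP[_ /w_ge0].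
have Z_mean i : (i < n)%N ->
    Z i = \sum_(0 <= k < n) w k * (if (i <= k)%N then (H k)^-1 else 0).
  move=> lt_in; rewrite (layer_decomposition Zn0 (ltnW lt_in)) big_mkcond /=.
  apply: eq_big_nat => k /andP[_ lt_kn]; case: ifP => _; last by rewrite mulr0.
  by rewrite /w mulfK // gt_eqF // H_gt0.
have jensen_i i : (i < n)%N -> Z i `^ p <=
    u `^ (p - 1) * \sum_(0 <= k < n) w k * (if (i <= k)%N then H k `^ (- p) else 0).
  move=> lt_in; rewrite u_eq (Z_mean i lt_in).
  have -> : \sum_(0 <= k < n) w k * (if (i <= k)%N then H k `^ (- p) else 0) =
      \sum_(0 <= k < n) w k * (if (i <= k)%N then (H k)^-1 else 0) `^ p.
    apply: eq_big_nat => k /andP[_ lt_kn].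
    case: ifP => _; last by rewrite powR0 ?gt_eqF.
    by rewrite -powR_inv1 ?ltW ?H_gt0 // -powRrM mulN1r.
  apply: jensen_powR => // k; rewrite mem_index_iota => /andP[_ lt_kn].
    exact: w_ge0.
  by case: ifP => _ //; rewrite invr_ge0 ltW ?H_gt0.
have count_k k : (k < n)%N ->
    \sum_(0 <= i < n) (if (i <= k)%N then H k `^ (- p) else 0) = k.+1%:R * H k `^ (- p).
  move=> lt_kn; rewrite -big_mkcond big_nat_leq_cond // sumr_const_nat subn0.
  by rewrite mulr_natl.
have term_le_max k : (k < n)%N -> k.+1%:R * H k `^ (- p) <= M.
  move=> lt_kn.
  exact: (le_bigmax _ (fun k : 'I_n => k.+1%:R * H k `^ (- p)) (Ordinal lt_kn)).
apply: le_trans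
  (_ : u `^ (p - 1) * \sum_(0 <= k < n) w k * (k.+1%:R * H k `^ (- p)) <= _).
  apply: le_trans (_ : \sum_(0 <= i < n) u `^ (p - 1) *
      \sum_(0 <= k < n) w k * (if (i <= k)%N then H k `^ (- p) else 0) <= _).
    by rewrite big_nat [X in _ <= X]big_nat; apply: ler_sum => i /andP[_ /jensen_i].
  rewrite -mulr_sumr exchange_big_nat /= ler_wpM2l ?powR_ge0 //.
  rewrite big_nat [X in _ <= X]big_nat; apply: ler_sum => k /andP[_ lt_kn].
  by rewrite -mulr_sumr count_k.
rewrite -(mulr_powRB1 u_ge0 p_gt0) -mulrA mulrCA ler_wpM2l ?powR_ge0 //.
rewrite u_eq mulr_suml big_nat [X in _ <= X]big_nat.
by apply: ler_sum => k /andP[_ lt_kn]; rewrite ler_wpM2l ?w_ge0 ?term_le_max.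
Qed.

Lemma sum_powR_ord_le_max_step n p (h : nat -> R) (y : 'I_n -> R) : 1 < p ->
  (forall i, (i < n)%N -> 0 < h i) ->
  (forall i j : 'I_n, (i <= j)%N -> y j <= y i) -> (forall i, 0 <= y i) ->
  \sum_(i < n) y i `^ p <= (\sum_(i < n) h i * y i) `^ p *
    max_step_value h n p.
Proof.
move=> p_gt1 h_gt0 y_noninc y_ge0.
pose Z k := oapp y 0 (insub k : option 'I_n).
have Z_lt k (lt_kn : (k < n)%N) : Z k = y (Ordinal lt_kn) by rewrite /Z insubT.
have Z_ge k : (n <= k)%N -> Z k = 0 by move=> le_nk; rewrite /Z insubN // -leqNgt.
have sum_ordE (F : nat -> R -> R) :
    \sum_(i < n) F i (y i) = \sum_(0 <= i < n) F i (Z i).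
  by rewrite big_mkord; apply: eq_bigr => i _; rewrite /Z valK.
rewrite (sum_ordE (fun _ x => x `^ p)) (sum_ordE (fun i x => h i * x)).
apply: sum_powR_le_max_step => // [k lt_kn|]; last exact: Z_ge.
rewrite (Z_lt _ lt_kn); case: (ltnP k.+1 n) => [lt_k1n | le_nk1].
  by rewrite (Z_lt _ lt_k1n) y_noninc.
by rewrite Z_ge.
Qed.

Lemma max_step_value_attained n p (h : nat -> R) u : 0 < p -> (0 < n)%N ->
  (forall i, (i < n)%N -> 0 < h i) -> 0 <= u ->
  exists y : 'I_n -> R,
    [/\ forall i j : 'I_n, (i <= j)%N -> y j <= y i, forall i, 0 <= y i,
        \sum_(i < n) h i * y i = u &
        \sum_(i < n) y i `^ p = u `^ p * max_step_value h n p].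
Proof.
move=> p_gt0 n_gt0 h_gt0 u_ge0.
pose F (k : 'I_n) := k.+1%:R * (\sum_(0 <= i < k.+1) h i) `^ (- p).
have F_ge0 (k : 'I_n) : true -> 0 <= F k by rewrite mulr_ge0 ?powR_ge0.
rewrite /max_step_value (bigmax_eq_arg 0 (Ordinal n_gt0) (fun _ => true) F isT F_ge0).
set L := [arg max_(_ > _ | _) _]%O.
set HL := \sum_(0 <= i < L.+1) h i.
have HL_gt0 : 0 < HL by exact: partial_sum_gt0 h_gt0 (ltn_ord L).
exists (fun i : 'I_n => if (i <= L)%N then u / HL else 0); split.
- move=> i j le_ij; case: ifP => [le_jL | _]; first by rewrite (leq_trans le_ij le_jL).
  by case: ifP => _ //; rewrite divr_ge0 // ltW.
- by move=> i; case: ifP => _ //; rewrite divr_ge0 // ltW.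
- rewrite (eq_bigr (fun i : 'I_n => if (i <= L)%N then h i * (u / HL) else 0)).
    rewrite -big_mkcond (big_ord_leq_cond _ L (fun i => h i * (u / HL))).
    by rewrite -mulr_suml mulrC divfK // gt_eqF.
  by move=> i _; case: ifP => _; rewrite ?mulr0.
- rewrite (eq_bigr (fun i : 'I_n => if (i <= L)%N then (u / HL) `^ p else 0)).
    rewrite -big_mkcond (big_ord_leq_cond _ L (fun=> (u / HL) `^ p)).
    rewrite sumr_const_nat subn0 /F -/HL.
    rewrite powRM ?invr_ge0 ?(ltW HL_gt0) // -(powR_inv1 (ltW HL_gt0)) -powRrM mulN1r.
    by rewrite -mulr_natl; ring.
  by move=> i _; case: ifP => _ //; rewrite powR0 // gt_eqF.
Qed.

Lemma hminus_gt0 (W : R -> R) N i :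
  (forall a b : R, 0 <= a -> a < b -> b <= 1 -> W a < W b) -> (0 < i <= N)%N ->
  0 < hminus W N i.
Proof.
move=> W_incr /andP[i_gt0 le_iN].
have N_gt0 : (0 < N)%N by rewrite (leq_trans i_gt0).
rewrite /hminus subr_gt0; apply: W_incr.
- by rewrite divr_ge0 ?ler0n.
- by rewrite ltr_pM2r ?invr_gt0 ?ltr0n // ltr_nat subn1 prednK.
- by rewrite ler_pdivrMr ?ltr0n // mul1r ler_nat.
Qed.

Lemma objective_attains_bound (W : R -> R) N n beta lambda v :
  (0 < n)%N -> 0 < beta -> 0 < lambda -> 0 <= v ->
  (forall i, (i < n)%N -> 0 < hminus W N i.+1) ->
  exists y : 'I_n -> R, feasible W N v y /\ objective beta lambda y =
    - (v / lambda) `^ (1 / beta) *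
      max_step_value (fun i => hminus W N i.+1) n (1 / beta).
Proof.
move=> n_gt0 beta_gt0 lambda_gt0 v_ge0 h_gt0.
have p_gt0 : 0 < 1 / beta by rewrite divr_gt0.
have vl_ge0 : 0 <= v / lambda by rewrite divr_ge0 // ltW.
have [z [z_noninc z_ge0 z_sum z_obj]] :=
  max_step_value_attained p_gt0 n_gt0 h_gt0 vl_ge0.
exists (fun i => lambda * z i); split; first split.
- by move=> i j /z_noninc; rewrite ler_pM2l.
- split; first by move=> i; rewrite mulr_ge0 // ltW.
  rewrite (eq_bigr (fun i : 'I_n => lambda * (hminus W N i.+1 * z i))) => [|i _].
    by rewrite -mulr_sumr z_sum mulrC divfK // gt_eqF.
  by rewrite mulrCA.
- rewrite /objective (eq_bigr (fun i : 'I_n => z i `^ (1 / beta))) => [|i _].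
    by rewrite z_obj mulNr.
  by rewrite mulrAC mulfV ?mul1r // gt_eqF.
Qed.

Lemma objective_ge_bound (W : R -> R) N n beta lambda v (y : 'I_n -> R) :
  0 < beta < 1 -> 0 < lambda ->
  (forall i, (i < n)%N -> 0 < hminus W N i.+1) -> feasible W N v y ->
  - (v / lambda) `^ (1 / beta) *
      max_step_value (fun i => hminus W N i.+1) n (1 / beta)
    <= objective beta lambda y.
Proof.
move=> /andP[beta_gt0 beta_lt1] lambda_gt0 h_gt0 [y_noninc [y_ge0 y_sum]].
have p_gt1 : 1 < 1 / beta by rewrite div1r invf_gt1.
have -> : v / lambda = \sum_(i < n) hminus W N i.+1 * (y i / lambda).
  by rewrite -y_sum mulr_suml; apply: eq_bigr => i _; rewrite mulrA.
rewrite /objective mulNr lerN2.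
apply: sum_powR_ord_le_max_step => // [i j /y_noninc|i].
  by rewrite ler_pM2r ?invr_gt0.
by rewrite divr_ge0 // ltW.
Qed.
End PowerSums.

Theorem corollary2 (R : realType) (N n : nat) (beta lambda v : R) (W : R -> R) :
  (1 <= n)%N -> (n <= N)%N -> 0 < beta < 1 -> 0 < lambda ->
  inverse_S_shaped W -> W 0 = 0 -> W 1 = 1 -> 0 <= v ->
  let opt := - powR (v / lambda) (1 / beta) *
     \big[Num.max/0]_(L < n)
        (L.+1%:R * powR (\sum_(1 <= i < L.+2) hminus W N i) (- (1 / beta))) in
  (exists y : 'I_n -> R, feasible W N v y /\ objective beta lambda y = opt) /\
  (forall y : 'I_n -> R, feasible W N v y -> opt <= objective beta lambda y).
Proof.
move=> n_gt0 le_nN beta01 lambda_gt0 [W_incr _] _ _ v_ge0 opt.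
have h_gt0 i : (i < n)%N -> 0 < hminus W N i.+1.
  by move=> lt_in; apply: hminus_gt0 => //; rewrite (leq_trans lt_in).
have -> : opt = - (v / lambda) `^ (1 / beta) *
    max_step_value (fun i => hminus W N i.+1) n (1 / beta).
  by rewrite /opt; congr (_ * _); apply: eq_bigr => k _; rewrite big_add1.
split; first by apply: objective_attains_bound; case/andP: beta01.
by move=> y; exact: objective_ge_bound.
Qed.
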